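(* Let $G=HK$ for two normal subgroups $H$ and $K$ of the finite group $G$, let $p$ be a prime and $r\ge1$ an integer such that $H$ has exponent $p^r-1$. If $M(G,H,K)$ is trivial, then for every $i=1,\dots,k_K(H)$ one has $\alpha(p^r,i)=|L(p^r,i;h,K)|=1$.
   Context: All groups are finite; ${}^g x=gxg^{-1}$, $[x,y]=xyx^{-1}y^{-1}$. For normal subgroups $H,K$ of $G$, $H\wedge K$ is the group generated by symbols $h\wedge k$ ($h\in H,k\in K$) subject to $hh'\wedge k=({}^h h'\wedge {}^h k)(h\wedge k)$, $h\wedge kk'=(h\wedge k)({}^k h\wedge {}^k k')$, and $y\wedge y=1$ for $y\in H\cap K$; $\kappa':H\wedge K\to[H,K]$, $h\wedge k\mapsto[h,k]$, is an epimorphism and $M(G,H,K):=\ker\kappa'$. For $x\in H$, $C^\wedge_K(x)=\{k\in K:x\wedge k=1\}\le C_K(x)$. Let $h_1,\dots,h_{k_K(H)}$ be representatives of the $K$-conjugacy classes in $H$ ($k_K(H)$ = number of such classes). Define $\alpha(m,i)=|C_K(h_i^m)|/|C_K(h_i)|$ and $|L(m,i;h,K)|=|C_K(h_i^m):C^\wedge_K(h_i^m)|$, the order of $L(m,i;h,K)=C_K(h_i^m)/C^\wedge_K(h_i^m)$. *)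

From HB Require Import structures.
From mathcomp Require Import all_boot all_order all_algebra all_fingroup all_solvable.
From Stdlib Require Import ClassicalEpsilon.
Set Implicit Arguments. Unset Strict Implicit. Unset Printing Implicit Defensive.
Import GRing.Theory.

Local Open Scope group_scope.

Section Wedge.
Variable gT : finGroupType.

(* Paper conventions: ^g x = g x g^-1, [x,y] = x y x^-1 y^-1.
   (MathComp's x ^ g is g^-1 x g, so ^g x = x ^ g^-1.) *)
Definition lconj (g x : gT) : gT := g * x * g^-1.
Definition pcomm (x y : gT) : gT := x * y * x^-1 * y^-1.

(* A letter (b, (h, k)) stands for the symbol h /\ k if b = false and for
   its inverse (h /\ k)^-1 if b = true.  Words are sequences of letters,
   read as left-to-right products. *)
Definition letter := (bool * (gT * gT))%type.
Definition sym (h k : gT) : letter := (false, (h, k)).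
Definition flip (a : letter) : letter := (~~ a.1, a.2).

(* The congruence on words presenting the nonabelian exterior product H /\ K:
   generated by free cancellation and the defining relations. Two words are
   related iff they are equal in H /\ K. *)
Inductive wrel (H K : {set gT}) : seq letter -> seq letter -> Prop :=
| wr_refl w : wrel H K w w
| wr_sym w w' : wrel H K w w' -> wrel H K w' w
| wr_trans w1 w2 w3 : wrel H K w1 w2 -> wrel H K w2 w3 -> wrel H K w1 w3
| wr_ctx u v w w' : wrel H K w w' -> wrel H K (u ++ w ++ v) (u ++ w' ++ v)
| wr_free a : wrel H K [:: a; flip a] [::]
| wr_rel1 h h' k : h \in H -> h' \in H -> k \in K ->
    wrel H K [:: sym (h * h') k] [:: sym (lconj h h') (lconj h k); sym h k]
| wr_rel2 h k k' : h \in H -> k \in K -> k' \in K ->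
    wrel H K [:: sym h (k * k')] [:: sym h k; sym (lconj k h) (lconj k k')]
| wr_rel3 y : y \in H :&: K -> wrel H K [:: sym y y] [::].

Definition word_in (H K : {set gT}) (w : seq letter) : Prop :=
  forall a, a \in w -> a.2.1 \in H /\ a.2.2 \in K.

(* kappa' : H /\ K -> [H,K], h /\ k |-> [h,k], evaluated on words. *)
Definition kappa (w : seq letter) : gT :=
  foldr (fun a acc => (if a.1 then (pcomm a.2.1 a.2.2)^-1
                       else pcomm a.2.1 a.2.2) * acc) 1 w.

(* M(G,H,K) = ker kappa' is trivial. *)
Definition M_trivial (H K : {set gT}) : Prop :=
  forall w, word_in H K w -> kappa w = 1 -> wrel H K w [::].

Definition pbool (P : Prop) : bool :=
  if excluded_middle_informative P then true else false.

Definition Cwedge (H K : {set gT}) (x : gT) : {set gT} :=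
  [set k in K | pbool (wrel H K [:: sym x k] [::])].

Definition alpha (K : {set gT}) (m : nat) (x : gT) : rat :=
  (#|'C_K[x ^+ m]|%:R / #|'C_K[x]|%:R)%R.

(* |L(m, x; h, K)| = |C_K(x^m) : C^wedge_K(x^m)| *)
Definition L_order (H K : {set gT}) (m : nat) (x : gT) : nat :=
  #|'C_K[x ^+ m] : Cwedge H K (x ^+ m)|.

End Wedge.

(* Proof idea: the commutator map kappa' is well defined on H /\ K, so
   x /\ k = 1 forces [x, k] = 1; conversely, when M(G,H,K) is trivial,
   [x, k] = 1 forces x /\ k = 1.  Hence C^/\_K(x) = C_K(x) for every x in H,
   and L(m, x; h, K) is trivial for every m.  Since H has exponent p^r - 1,
   x^(p^r) = x for x in H, so alpha(p^r, x) = 1. *)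
From mathcomp Require Import all_boot all_order all_algebra all_fingroup all_solvable.
From Stdlib Require Import ClassicalEpsilon.
Local Open Scope group_scope.

Section Wedge.
Variable gT : finGroupType.
Implicit Types (H K : {set gT}) (G : {group gT}) (x y : gT).

Lemma pboolP (P : Prop) : reflect P (pbool P).
Proof. by rewrite /pbool; case: excluded_middle_informative => ?; constructor. Qed.

Lemma pcomm_eq1 x y : (pcomm x y == 1) = (x * y == y * x).
Proof. by rewrite /pcomm -mulgA -invMg -eq_mulgV1. Qed.

Lemma kappa_cat (u v : seq (letter gT)) : kappa (u ++ v) = kappa u * kappa v.
Proof. by elim: u => [|a u IH] /=; rewrite ?mul1g // IH mulgA. Qed.

Lemma kappa_sym x y : kappa [:: sym x y] = pcomm x y.
Proof. exact: mulg1. Qed.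

Lemma kappa_wrel {H K w w'} : wrel H K w w' -> kappa w = kappa w'.
Proof.
elim=> //=.
- by move=> ??? _ -> _ ->.
- by move=> u v ?? _ E; rewrite !kappa_cat E.
- by case=> [[] [x y]] /=; rewrite mulg1 ?mulVg ?mulgV.
- move=> h h' k _ _ _; rewrite /pcomm /lconj !mulg1 !invMg !invgK.
  by rewrite !mulgA ?mulgKV ?mulgK ?mulgKV ?mulgK.
- move=> h k k' _ _ _; rewrite /pcomm /lconj !mulg1 !invMg !invgK.
  by rewrite !mulgA ?mulgKV ?mulgK ?mulgKV ?mulgK.
- by move=> y _; rewrite /pcomm mulg1 mulgK mulgV.
Qed.

Lemma Cwedge_sub_cent1 H K x : Cwedge H K x \subset 'C_K[x].
Proof.
apply/subsetP=> k; rewrite inE => /andP[kK /pboolP W].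
rewrite in_setI kK; apply/cent1P/eqP.
by rewrite eq_sym -pcomm_eq1 -kappa_sym (kappa_wrel W).
Qed.

Lemma Cwedge_M_trivial H K x :
  M_trivial H K -> x \in H -> Cwedge H K x = 'C_K[x].
Proof.
move=> MT xH; apply/eqP; rewrite eqEsubset Cwedge_sub_cent1 /=.
apply/subsetP=> k /setIP[kK /cent1P cxk]; rewrite inE kK; apply/pboolP.
apply: MT; first by move=> a; rewrite inE => /eqP -> /=.
by rewrite kappa_sym; apply/eqP; rewrite pcomm_eq1 cxk.
Qed.

Lemma L_order_M_trivial G (K : {group gT}) m x :
  M_trivial G K -> x \in G -> L_order G K m x = 1%N.
Proof. by move=> MT xG; rewrite /L_order Cwedge_M_trivial ?groupX // indexgg. Qed.

Lemma expg_exponentS G x : x \in G -> x ^+ (exponent G).+1 = x.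
Proof. by move=> xG; rewrite expgSr expg_exponent // mul1g. Qed.

Lemma alpha_idem (K : {group gT}) m x : x ^+ m = x -> alpha K m x = 1%R.
Proof.
by move=> xm; rewrite /alpha xm GRing.divff // Num.Theory.pnatr_eq0 -lt0n cardG_gt0.
Qed.

End Wedge.

Theorem mainTheorem3 (gT : finGroupType) (G H K : {group gT}) (p r : nat) :
  (H <| G)%g -> (K <| G)%g -> G :=: (H * K)%g ->
  prime p -> (1 <= r)%N -> exponent H = (p ^ r - 1)%N ->
  M_trivial H K ->
  forall h : gT, h \in H ->
    alpha K (p ^ r) h = 1%R /\ L_order H K (p ^ r) h = 1%N.
Proof.
move=> _ _ _ p_pr _ expH MT h hH; split; last exact: L_order_M_trivial.
have pr_eq : (p ^ r = (exponent H).+1)%N by rewrite expH subn1 prednK // expn_gt0 prime_gt0.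
by apply: alpha_idem; rewrite pr_eq expg_exponentS.
Qed.
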